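(* Let $\beta>0$, $\tilde\lambda\in(0,1]$, $\mathcal{L}\ge0$, $x\ge0$, $z\ge0$, and portfolio weights $w^D,w^E\ge0$ with $w^D+w^E=1$, and set $y=-w^E\mathcal{L}$. For $\Delta>y$ let $p^D(\Delta)=x/(\Delta-y)$. If $$\Big(\tilde \lambda(x+z) - \beta\mathcal{L} w^D \Big)^2 < 4\beta \tilde\lambda \mathcal{L}xw^E,$$ then there is no $\Delta>y$ satisfying $\beta(\mathcal{L}+\Delta)\le\tilde\lambda\big(z+\Delta p^D(\Delta)\big)$.
   Context: Single period $t$ of a stablecoin market model. The stablecoin holder holds all $\mathcal{L}=\mathcal{L}_{t-1}$ outstanding stablecoins and Ether $\bar n_{t-1}$, and chooses weights $w^D$ (stablecoin) and $w^E=1-w^D$ (Ether); $x=w^D\bar n_{t-1}p^E_t$ is the new dollar stablecoin demand and $y=w^D\mathcal{L}-\mathcal{L}=-w^E\mathcal{L}$. The speculator, owing $\mathcal{L}$ stablecoins and holding Ether worth $z$ dollars, changes supply by $\Delta$; for $\Delta>y$ the market clears at price $p^D(\Delta)=x/(\Delta-y)$. Its leverage constraint (with liquidation threshold $\beta$ and leverage bound $\tilde\lambda$; $\tilde\lambda=1$ is the protocol's liquidation constraint) is $\beta(\mathcal{L}+\Delta)\le\tilde\lambda(z+\Delta p^D(\Delta))$. *)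

From Stdlib Require Import Reals.
Open Scope R_scope.

Definition pD (x y Delta : R) : R := x / (Delta - y).

(** Writing [d = Delta - y > 0] for the distance to the pole of the price, multiplying
    the leverage constraint by [d] turns it into [q d <= 0] for the quadratic
    [q t = beta t^2 + (beta L wD - lam (x + z)) t + lam x wE L].  The hypothesis says
    exactly that the discriminant of [q] is negative; as [beta > 0], [q] is positive
    everywhere. *)

From Stdlib Require Import Reals Lra Psatz.
Open Scope R_scope.

Lemma quadratic_pos_of_discr_neg (a b c t : R) :
  0 < a -> b ^ 2 < 4 * a * c -> 0 < a * t ^ 2 + b * t + c.
Proof.
  intros Ha Hdiscr.
  assert (Hcomplete : 4 * a * (a * t ^ 2 + b * t + c)
                      = (2 * a * t + b) ^ 2 + (4 * a * c - b ^ 2)) by ring.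
  assert (Hsq : 0 <= (2 * a * t + b) ^ 2) by apply pow2_ge_0.
  nra.
Qed.

Lemma mul_pD (x y Delta : R) :
  y < Delta -> Delta * pD x y Delta = x + x * y / (Delta - y).
Proof. intros Hy; unfold pD; field; lra. Qed.

Lemma leverage_constraint_quadratic (beta lam L x z wD wE d : R) :
  wD + wE = 1 -> 0 < d ->
  beta * (L + (d - wE * L))
    <= lam * (z + (d - wE * L) * pD x (- wE * L) (d - wE * L)) ->
  beta * d ^ 2 + (beta * L * wD - lam * (x + z)) * d + lam * x * wE * L <= 0.
Proof.
  intros Hw Hd Hc.
  rewrite mul_pD in Hc by lra.
  replace (d - wE * L - - wE * L) with d in Hc by ring.
  apply Rmult_le_compat_r with (r := d) in Hc; [|lra].
  replace (lam * (z + (x + x * (- wE * L) / d)) * d)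
    with (lam * (x + z) * d - lam * x * wE * L) in Hc by (field; lra).
  replace wD with (1 - wE) by lra.
  nra.
Qed.

Theorem proposition3p3 (beta lam L x z wD wE : R) :
  0 < beta -> 0 < lam <= 1 -> 0 <= L -> 0 <= x -> 0 <= z ->
  0 <= wD -> 0 <= wE -> wD + wE = 1 ->
  (lam * (x + z) - beta * L * wD) ^ 2 < 4 * beta * lam * L * x * wE ->
  ~ (exists Delta : R, - wE * L < Delta /\
       beta * (L + Delta) <= lam * (z + Delta * pD x (- wE * L) Delta)).
Proof.
  intros Hbeta _ _ _ _ _ _ Hw Hdiscr [Delta [HDelta Hc]].
  set (d := Delta + wE * L).
  assert (Hd : 0 < d) by (unfold d; lra).
  replace Delta with (d - wE * L) in Hc by (unfold d; ring).
  pose proof (leverage_constraint_quadratic beta lam L x z wD wE d Hw Hd Hc) as Hq_le.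
  assert (Hq_pos : 0 < beta * d ^ 2 + (beta * L * wD - lam * (x + z)) * d
                         + lam * x * wE * L).
  { apply quadratic_pos_of_discr_neg; [exact Hbeta|].
    replace ((beta * L * wD - lam * (x + z)) ^ 2)
      with ((lam * (x + z) - beta * L * wD) ^ 2) by ring.
    lra. }
  lra.
Qed.
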